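(* Let $G=(V,E)$ be a $k$-cozy graph with edge connectivity $\kappa'(G)=2\ell$, and let $D\subset E$ with $|D|=2\ell$ be a set of edges whose removal disconnects $G$ into two components $G_1$ and $G_2$. Let $V_1,V_2$ be multisets of vertices, both taken from the vertex set of the same component (either $G_1$ or $G_2$), with $|V_1|=|V_2|=q\le\ell$. Then there are $q$ edge-disjoint paths in $G$ connecting $V_1$ and $V_2$ with multiplicities preserved, such that every vertex of $V_1$ and of $V_2$ is the endpoint of some such path.
   Context: An undirected graph $G$ is $k$-cozy if it is connected, $k$-regular, and equipped with a $1$-factorization, i.e., an assignment of colors from $\{1,\dots,k\}$ to its edges such that the $k$ edges incident at each vertex receive distinct colors. The edge connectivity $\kappa'(G)$ is the minimum number of edges whose removal disconnects $G$. ''Multiplicities preserved'' means a vertex appearing $m$ times in $V_1$ (resp. $V_2$) is the endpoint of $m$ of the paths. *)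

From mathcomp Require Import all_boot.
Set Implicit Arguments. Unset Strict Implicit. Unset Printing Implicit Defensive.

(* Simple undirected graphs on a finite vertex type T: symmetric irreflexive
   adjacency relation e. Edges are unordered pairs, represented as the
   2-element sets [set x; y]. *)
Definition simple_graph (T : finType) (e : rel T) : Prop :=
  symmetric e /\ irreflexive e.

Definition edges (T : finType) (e : rel T) : {set {set T}} :=
  [set [set x; y] | x in T, y in T & e x y].

Definition remove_edges (T : finType) (e : rel T) (F : {set {set T}}) : rel T :=
  fun x y => e x y && ([set x; y] \notin F).

Definition connected_graph (T : finType) (e : rel T) : Prop :=
  forall x y : T, connect e x y.

Definition regular (T : finType) (e : rel T) (k : nat) : Prop :=
  forall x : T, #|[set y | e x y]| = k.

(* 1-factorization: colouring of edges by k colours such that the edges at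
   every vertex receive distinct colours. *)
Definition one_factorization (T : finType) (e : rel T) (k : nat)
  (c : {set T} -> 'I_k) : Prop :=
  forall x y z : T, e x y -> e x z -> c [set x; y] = c [set x; z] -> y = z.

Definition cozy (T : finType) (e : rel T) (k : nat) : Prop :=
  [/\ simple_graph e, connected_graph e, regular e k &
      exists c : {set T} -> 'I_k, one_factorization e c].

Definition disconnecting (T : finType) (e : rel T) (F : {set {set T}}) : Prop :=
  F \subset edges e /\ ~ connected_graph (remove_edges e F).

Definition edge_connectivity (T : finType) (e : rel T) (n : nat) : Prop :=
  (exists F, disconnecting e F /\ #|F| = n) /\
  (forall F, disconnecting e F -> n <= #|F|).

Definition two_components (T : finType) (e : rel T) : Prop :=
  exists a b : T, ~~ connect e a b /\ forall x, connect e x a || connect e x b.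

Definition walk_edges (T : finType) (x : T) (p : seq T) : seq {set T} :=
  [seq [set ab.1; ab.2] | ab <- zip (x :: p) p].

Definition is_path (T : finType) (e : rel T) (x : T) (p : seq T) (y : T) : Prop :=
  [/\ path e x p, uniq (x :: p) & last x p = y].

From mathcomp Require Import all_boot zify.
Set Implicit Arguments. Unset Strict Implicit. Unset Printing Implicit Defensive.

(* Only kappa'(G) >= 2l >= q and the simplicity of G are needed: the argument
   is the edge version of Menger's theorem, run as an integral flow from the
   multiset V1 to the multiset V2 that never uses an edge in both directions.
   Such a flow is built one source/sink pair at a time by augmenting paths: if
   the new sink were not reachable in the residual graph, the vertices that
   are reachable would be left only by edges carrying flow outwards, giving an
   edge cut with fewer than q <= kappa'(G) edges.  Cancelling directed cycles
   keeps the flow balanced, and an acyclic flow splits into q arc-disjoint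
   simple paths, each followed from a source until it gets stuck at a sink;
   since no edge carries flow both ways, these paths are edge-disjoint. *)

Lemma sum_card_fibres (aT rT : finType) (A : {set aT}) (f : aT -> rT)
    (S : {pred rT}) :
  \sum_(y in S) #|[set x in A | f x == y]| = #|[set x in A | f x \in S]|.
Proof.
rewrite -[RHS]sum1_card (partition_big f (mem S)) => [|x]; last first.
  by rewrite inE => /andP[].
apply: eq_bigr => y yS; rewrite -sum1_card; apply: eq_bigl => x.
by rewrite !inE -andbA; case: (f x =P y) => [->|]; rewrite ?yS ?andbF.
Qed.

Lemma sum_count_mem (T : finType) (S : {pred T}) (s : seq T) :
  \sum_(v in S) count_mem v s = count (mem S) s.
Proof.
elim: s => [|x s IH] /=; first by rewrite big1.
rewrite big_split /= IH; congr (_ + _).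
case xS: (x \in S); last first.
  by rewrite big1 // => v vS; case: eqP => // xv; rewrite xv vS in xS.
by rewrite (bigD1 x) //= eqxx big1 // => v /andP[_ /negbTE]; rewrite eq_sym => ->.
Qed.

Lemma connect_is_path (T : finType) (r : rel T) x y :
  connect r x y -> exists p, is_path r x p y.
Proof. by case/connectP=> p /shortenP[p' rp' up' _] ->; exists p'. Qed.

Lemma eq_set2 (T : finType) (a b c d : T) :
  [set a; b] = [set c; d] -> (a = c /\ b = d) \/ (a = d /\ b = c).
Proof.
move=> E; have: a \in [set c; d] by rewrite -E set21.
have: b \in [set c; d] by rewrite -E set22.
have: c \in [set a; b] by rewrite E set21.
have: d \in [set a; b] by rewrite E set22.
by rewrite !inE; do 4 (case/orP => /eqP ?); subst; first [by left | by right].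
Qed.

Section Flows.
Variable T : finType.
Implicit Types (F G H : {set T * T}) (A B : seq T).

Definition outdeg F v := #|[set a in F | a.1 == v]|.
Definition indeg F v := #|[set a in F | a.2 == v]|.

Lemma outdegD1 F x y v :
  (x, y) \in F -> outdeg F v = outdeg (F :\ (x, y)) v + (x == v).
Proof.
move=> xyF; rewrite /outdeg (cardsD1 (x, y) [set b in F | b.1 == v]) inE xyF addnC.
by congr (_ + _); apply/eq_card => b; rewrite !inE andbA.
Qed.

Lemma indegD1 F x y v :
  (x, y) \in F -> indeg F v = indeg (F :\ (x, y)) v + (y == v).
Proof.
move=> xyF; rewrite /indeg (cardsD1 (x, y) [set b in F | b.2 == v]) inE xyF addnC.
by congr (_ + _); apply/eq_card => b; rewrite !inE andbA.
Qed.

(* [G] carries one more unit of flow from [x] to [y] than [F]: the net outflow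
   [outdeg - indeg] grows by one at [x] and drops by one at [y]. *)
Definition shifted F G x y := forall v,
  outdeg G v + indeg F v + (v == y) = indeg G v + outdeg F v + (v == x).

Lemma shifted_refl F x : shifted F F x x.
Proof. by move=> v; lia. Qed.

Lemma shifted_sym F G x y : shifted F G x y -> shifted G F y x.
Proof. by move=> FG v; have := FG v; lia. Qed.

Lemma shifted_trans F G H x y z :
  shifted F G x y -> shifted G H y z -> shifted F H x z.
Proof. by move=> FG GH v; have := FG v; have := GH v; lia. Qed.

Lemma shifted_setD1 F x y : (x, y) \in F -> shifted (F :\ (x, y)) F x y.
Proof.
by move=> xyF v; rewrite (outdegD1 v xyF) (indegD1 v xyF) !(eq_sym v); lia.
Qed.

Lemma shifted_setU1 F x y : (x, y) \notin F -> shifted F ((x, y) |: F) x y.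
Proof. by move=> xyF; rewrite -{1}(setU1K xyF); apply/shifted_setD1/setU11. Qed.

(* Flow from the sources [A] to the sinks [B], counted with multiplicity. *)
Definition balanced F A B := forall v,
  outdeg F v + count_mem v B = indeg F v + count_mem v A.

Lemma balanced_shifted F G A B x y :
  shifted F G x y -> balanced G (x :: A) (y :: B) <-> balanced F A B.
Proof.
move=> FG; split=> bal v; have := FG v; have := bal v;
  by rewrite /= !(eq_sym x) !(eq_sym y); lia.
Qed.

Lemma balanced_perm F A A' B B' :
  perm_eq A A' -> perm_eq B B' -> balanced F A B -> balanced F A' B'.
Proof. by move=> /permP AA' /permP BB' bal v; rewrite -AA' -BB'. Qed.

Lemma balanced_size F A B : balanced F A B -> size A = size B.
Proof.
move=> bal.
have : \sum_(v in T) (outdeg F v + count_mem v B) =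
       \sum_(v in T) (indeg F v + count_mem v A).
  by apply: eq_bigr => v _; exact: bal.
rewrite !big_split /= !sum_card_fibres !sum_count_mem !count_predT.
have -> : [set a in F | a.1 \in predT] = [set a in F | a.2 \in predT].
  by apply/setP => a; rewrite !inE.
by move/addnI.
Qed.

Definition arc_rel F : rel T := fun x y => (x, y) \in F.

Definition walk_arcs (x : T) (p : seq T) : seq (T * T) := zip (x :: p) p.

Lemma walk_arcs_snd x p a : a \in walk_arcs x p -> a.2 \in p.
Proof.
elim: p x => [|y p IH] x //=; rewrite !in_cons => /orP[/eqP-> /=|/IH->].
  by rewrite eqxx.
by rewrite orbT.
Qed.

Lemma walk_arcs_sub F x p : path (arc_rel F) x p -> {subset walk_arcs x p <= F}.
Proof.
elim: p x => [|y p IH] x //= /andP[xyF yp] a; rewrite in_cons => /orP[/eqP->|] //.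
exact: IH.
Qed.

Lemma shifted_remove_path F x p : path (arc_rel F) x p -> uniq (x :: p) ->
  shifted (F :\: [set a in walk_arcs x p]) F x (last x p).
Proof.
elim: p x => [|y p IH] x /= => [_ _|/andP[xyF yp] /andP[_ up]].
  have -> : [set a in [::]] = set0 :> {set T * T} by apply/setP => a; rewrite !inE.
  by rewrite setD0; apply: shifted_refl.
have -> : F :\: [set a in (x, y) :: walk_arcs y p] =
          (F :\: [set a in walk_arcs y p]) :\ (x, y).
  by apply/setP => a; rewrite !inE negb_or andbA.
apply: shifted_trans (IH _ yp up); apply: shifted_setD1.
rewrite !inE [_ \in F]xyF andbT.
by apply: contraL up => /walk_arcs_snd /= ->.
Qed.

Definition acyclic F := [forall a in F, ~~ connect (arc_rel F) a.2 a.1].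

Lemma arc_rel_sub F G : G \subset F -> subrel (arc_rel G) (arc_rel F).
Proof. by move=> /subsetP GF x y /GF. Qed.

Lemma acyclic_sub F G : G \subset F -> acyclic F -> acyclic G.
Proof.
move=> GF /forall_inP acF; apply/forall_inP => a aG.
apply: contra (acF a (subsetP GF a aG)); apply: connect_sub => x y /(arc_rel_sub GF).
exact: connect1.
Qed.

Lemma cancel_cycle F A B x y : balanced F A B -> (x, y) \in F ->
  connect (arc_rel F) y x -> exists2 G : {set T * T}, G \proper F & balanced G A B.
Proof.
move=> balF xyF /connect_is_path[p [Fp up px]].
have xyF' : (x, y) \in F :\: [set a in walk_arcs y p].
  by rewrite !inE xyF andbT; apply: contraL up => /walk_arcs_snd /= ->.
exists ((F :\: [set a in walk_arcs y p]) :\ (x, y)).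
  apply/properP; split; first exact: subset_trans (subD1set _ _) (subsetDl _ _).
  by exists (x, y); rewrite // !inE eqxx.
have := shifted_trans (shifted_setD1 xyF') (shifted_remove_path Fp up); rewrite px.
move/balanced_shifted => <-; exact/(balanced_shifted _ _ (shifted_refl F x)).
Qed.

Lemma exists_acyclic_subflow F A B : balanced F A B ->
  exists G, [/\ G \subset F, balanced G A B & acyclic G].
Proof.
have [m ltFm] := ubnP #|F|; elim: m F ltFm => // m IH F ltFm balF.
have [acF|/forall_inPn[[x y] xyF /negPn cyc]] := boolP (acyclic F); first by exists F.
have [G GF balG] := cancel_cycle balF xyF cyc.
have [H [HG balH acH]] := IH G (leq_trans (proper_card GF) ltFm) balG.
by exists H; split=> //; apply: subset_trans HG (proper_sub GF).
Qed.

Lemma reachable_sink F a : acyclic F ->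
  exists2 u, connect (arc_rel F) a u & forall w, (u, w) \notin F.
Proof.
(* [u] reaches the fewest vertices; an arc [u -> w] would let [w] reach strictly
   fewer, since by acyclicity [w] does not reach [u]. *)
move=> /forall_inP acF.
case: (arg_minnP (fun u => #|connect (arc_rel F) u|) (connect0 (arc_rel F) a)).
move=> u au minu; exists u => // w; apply/negP => uwF.
have : #|connect (arc_rel F) w| < #|connect (arc_rel F) u|.
  apply: proper_card; apply/properP; split.
    by apply/subsetP => z; apply: connect_trans; apply: connect1.
  by exists u; [apply: connect0 | apply: (acF (u, w))].
by rewrite ltnNge minu // (connect_trans au (connect1 uwF)).
Qed.

Lemma outdeg_sink F u : (forall w, (u, w) \notin F) -> outdeg F u = 0.
Proof.
move=> sink; apply: eq_card0 => -[z w]; rewrite !inE /=.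
by apply/andP=> -[zwF /eqP zu]; move: zwF; rewrite zu (negPf (sink w)).
Qed.

Lemma peel_path F a A B : acyclic F -> balanced F (a :: A) B ->
  exists u p, [/\ is_path (arc_rel F) a p u, u \in B &
                  balanced (F :\: [set z in walk_arcs a p]) A (rem u B)].
Proof.
move=> acF balF; have [u au sink] := reachable_sink a acF.
have [p [Fp up pu]] := connect_is_path au; exists u, p.
set G := F :\: _; have shiftG := shifted_remove_path Fp up; rewrite pu in shiftG.
have outG0 : outdeg G u = 0.
  by apply: outdeg_sink => w; rewrite !inE negb_and (sink w) orbT.
have uB : u \in B.
  rewrite -has_pred1 has_count; have := balF u; have := shiftG u.
  rewrite outG0 outdeg_sink //= eqxx (eq_sym u a); lia.
split=> //; apply/(balanced_shifted _ _ shiftG).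
exact: balanced_perm (perm_refl _) (perm_to_rem uB) balF.
Qed.

Lemma is_path_sub (r r' : rel T) x p y :
  subrel r r' -> is_path r x p y -> is_path r' x p y.
Proof. by move=> rr' [rp up py]; split=> //; apply: sub_path rp. Qed.

Lemma balanced_decomposition (x0 : T) A B F : acyclic F -> balanced F A B ->
  exists (ends : seq T) (P : nat -> seq T), [/\ perm_eq ends B,
    forall i, i < size A -> is_path (arc_rel F) (nth x0 A i) (P i) (nth x0 ends i) &
    forall i j, i < size A -> j < size A -> i != j ->
      [disjoint walk_arcs (nth x0 A i) (P i) & walk_arcs (nth x0 A j) (P j)]].
Proof.
elim: A B F => [|a A IH] B F acF balF.
  by exists [::], (fun _ => [::]); split=> //; case: B balF => // b B /balanced_size.
have [u [p [Fp uB balG]]] := peel_path acF balF.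
set G := F :\: _ in balG; have GF : G \subset F := subsetDl _ _.
have [ends [P [endsB GP disjP]]] := IH _ _ (acyclic_sub GF acF) balG.
have disj0 j : j < size A -> [disjoint walk_arcs a p & walk_arcs (nth x0 A j) (P j)].
  move=> ltj; apply: disjointWr (_ : _ \subset mem G) _.
    by apply/subsetP; case: (GP j ltj) => Gp _ _; apply: walk_arcs_sub Gp.
  by rewrite disjoint_subset; apply/subsetP => z zp; rewrite !inE zp.
exists (u :: ends), (fun i => if i is i'.+1 then P i' else p); split.
- by rewrite perm_sym (perm_trans (perm_to_rem uB)) // perm_cons perm_sym.
- by case=> [|i] //= lti; apply: is_path_sub (arc_rel_sub GF) (GP i lti).
case=> [|i] [|j] //= lti ltj ij; first exact: disj0.
  by rewrite disjoint_sym; apply: disj0.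
exact: disjP.
Qed.

Section GraphFlows.
Variable e : rel T.
Hypotheses (sym : symmetric e) (irr : irreflexive e).
Variable n : nat.
Hypothesis cut_ge : forall D, disconnecting e D -> n <= #|D|.

Definition is_flow F := forall x y, (x, y) \in F -> e x y && ((y, x) \notin F).

Definition residual F : rel T := fun x y => e x y && ((x, y) \notin F).

Lemma is_flow_sub F G : G \subset F -> is_flow F -> is_flow G.
Proof.
move=> /subsetP GF flowF x y /GF /flowF /andP[-> yxF].
exact: contra (GF _) yxF.
Qed.

(* One unit pushed along the residual arc [x -> y] cancels the flow on
   [y -> x] if there is any. *)
Definition flip F x y := if (y, x) \in F then F :\ (y, x) else (x, y) |: F.

Fixpoint augment F x p := if p is y :: p' then augment (flip F x y) y p' else F.

Lemma shifted_flip F x y : residual F x y -> shifted F (flip F x y) x y.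
Proof.
case/andP=> _ xyF; rewrite /flip; case: ifP => yxF.
  exact/shifted_sym/shifted_setD1.
exact: shifted_setU1.
Qed.

Lemma is_flow_flip F x y : is_flow F -> residual F x y -> is_flow (flip F x y).
Proof.
move=> flowF /andP[exy xyF]; rewrite /flip; case: ifP => yxF.
  by apply: is_flow_sub flowF; apply: subD1set.
move=> a b; rewrite !inE !xpair_eqE => /orP[/andP[/eqP-> /eqP->]|abF].
  rewrite exy yxF orbF /=; apply: contraFN (irr x) => /andP[_ /eqP xy].
  by rewrite {2}xy.
have /andP[-> baF] := flowF _ _ abF; rewrite (negbTE baF) orbF /=.
by apply: contraFN yxF => /andP[/eqP<- /eqP<-].
Qed.

Lemma residual_flip F x y a b :
  a != x -> b != x -> residual (flip F x y) a b = residual F a b.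
Proof.
move=> ax bx; rewrite /residual /flip; case: ifP => _; rewrite !inE xpair_eqE.
  by rewrite (negbTE bx) andbF.
by rewrite (negbTE ax).
Qed.

Lemma augment_flow F x p : is_flow F -> path (residual F) x p -> uniq (x :: p) ->
  is_flow (augment F x p) /\ shifted F (augment F x p) x (last x p).
Proof.
elim: p x F => [|y p IH] x F /= flowF; first by split; last exact: shifted_refl.
case/andP=> rxy yp /andP[xNyp up].
have yp' : path (residual (flip F x y)) y p.
  have Nx : all (predC1 x) (y :: p) by apply/allP => z /=; apply: contraTneq => ->.
  by apply: sub_in_path Nx yp => a b /= ax bx; rewrite residual_flip.
have [flow' shift'] := IH _ _ (is_flow_flip flowF rxy) yp' up.
by split=> //; apply: shifted_trans (shifted_flip rxy) shift'.
Qed.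

Definition boundary (S : {pred T}) : {set T * T} :=
  [set a | [&& a.1 \in S, a.2 \notin S & e a.1 a.2]].

Lemma disconnecting_boundary (S : {pred T}) x y :
  x \in S -> y \notin S -> disconnecting e [set [set a.1; a.2] | a in boundary S].
Proof.
move=> xS yS; split.
  apply/subsetP => _ /imsetP[a + ->]; rewrite inE => /and3P[_ _ ea].
  by apply/imset2P; exists a.1 a.2; rewrite ?inE.
have closedS : closed (remove_edges e [set [set a.1; a.2] | a in boundary S]) S.
  move=> a b /andP[eab]; apply: contraNeq => abS; apply/imsetP.
  move: abS; case aS: (a \in S); case bS: (b \in S) => // _.
    by exists (a, b); rewrite // inE aS bS eab.
  by exists (b, a); [rewrite inE bS aS sym eab | apply: setUC].
by move/(_ x y)/(closed_connect closedS); rewrite xS (negPf yS).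
Qed.

Lemma residual_connect F A B x y :
  is_flow F -> balanced F A B -> size A < n -> connect (residual F) x y.
Proof.
move=> flowF balF ltAn; apply: contraT => Nxy.
pose S := connect (residual F) x.
have closedS a b : a \in S -> residual F a b -> b \in S.
  by move=> xa /connect1; apply: connect_trans.
(* Nothing enters [S] and every edge leaving [S] carries flow out of it, so
   balance over [S] bounds that edge cut by the sources in [S]. *)
pose Out := [set a in F | a.1 \in S]; pose In := [set a in F | a.2 \in S].
have InOut : In \subset Out.
  apply/subsetP => -[z w]; rewrite !inE /= => /andP[zwF wS]; rewrite zwF /=.
  apply: closedS wS _; have /andP[ezw wzF] := flowF _ _ zwF.
  by rewrite /residual sym ezw.
have bdOut : boundary S \subset Out :\: In.
  apply/subsetP => -[w z]; rewrite !inE /= => /and3P[wS zS ewz].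
  rewrite wS (negPf zS) !andbT andbF /=.
  by apply: contraR zS => wzF; apply: closedS wS _; rewrite /residual ewz.
have balS : #|Out| + count (mem S) B = #|In| + count (mem S) A.
  rewrite -!sum_count_mem -!sum_card_fibres -!big_split /=.
  by apply: eq_bigr => v _; exact: balF.
have bdA : #|boundary S| <= count (mem S) A.
  apply: leq_trans (subset_leq_card bdOut) _.
  have := cardsID In Out; rewrite (setIidPr InOut) => OutE.
  by rewrite -(leq_add2l #|In|) OutE -balS leq_addr.
have n_bd : n <= #|boundary S|.
  apply: leq_trans (leq_imset_card (fun a : T * T => [set a.1; a.2]) _).
  exact: cut_ge (disconnecting_boundary (connect0 _ x) Nxy).
by move: ltAn; rewrite ltnNge (leq_trans n_bd (leq_trans bdA (count_size _ _))).
Qed.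

Lemma exists_balanced_flow A B :
  size A = size B -> size A <= n -> exists2 F, is_flow F & balanced F A B.
Proof.
elim: A B => [|a A IH] [|b B] //= => [_ _|[sAB] leAn].
  exists set0 => [x y|v]; first by rewrite inE.
  by rewrite /outdeg /indeg !setIdE !set0I !cards0.
have [F flowF balF] := IH B sAB (ltnW leAn).
have /connect_is_path[p [rp up pb]] := residual_connect a b flowF balF leAn.
have [flowG shiftG] := augment_flow flowF rp up.
by exists (augment F a p); rewrite // -pb; apply/(balanced_shifted _ _ shiftG).
Qed.

Lemma walk_edges_disjoint F x p y r : is_flow F ->
  path (arc_rel F) x p -> path (arc_rel F) y r ->
  [disjoint walk_arcs x p & walk_arcs y r] ->
  all (fun f => f \notin walk_edges y r) (walk_edges x p).
Proof.
move=> flowF Fp Fr disj; apply/allP => _ /mapP[[a b] ab ->].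
apply/mapP => -[[c d] cd /eq_set2 /= [[ac bd]|[ad bc]]]; subst c d.
  by rewrite (disjointFr disj ab) in cd.
have /andP[_ abF] := flowF _ _ (walk_arcs_sub Fr cd).
by rewrite (walk_arcs_sub Fp ab) in abF.
Qed.

End GraphFlows.

End Flows.

Theorem mainTheorem13 (T : finType) (e : rel T) (k l q : nat)
  (D : {set {set T}}) (V1 V2 : q.-tuple T) :
  cozy e k ->
  edge_connectivity e (2 * l) ->
  D \subset edges e -> #|D| = 2 * l ->
  two_components (remove_edges e D) ->
  (forall x y, x \in (V1 : seq T) ++ V2 -> y \in (V1 : seq T) ++ V2 ->
     connect (remove_edges e D) x y) ->
  q <= l ->
  exists (ends : q.-tuple T) (P : 'I_q -> seq T),
    [/\ perm_eq ends V2,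
        (forall i, is_path e (tnth V1 i) (P i) (tnth ends i)) &
        (forall i j, i != j ->
           all (fun f => f \notin walk_edges (tnth V1 j) (P j))
               (walk_edges (tnth V1 i) (P i)))].
Proof.
move=> [[sym irr] _ _ _] [_ cut_ge] _ _ _ _.
case: q V1 V2 => [|q] V1 V2 le_ql; first by exists V2, (fun _ => [::]); split=> // -[].
have sizeV : size V1 = size V2 by rewrite !size_tuple.
have le_V1 : size V1 <= 2 * l by rewrite size_tuple (leq_trans le_ql) // leq_pmull.
have [F flowF balF] := exists_balanced_flow sym irr cut_ge sizeV le_V1.
have [G [GF balG acG]] := exists_acyclic_subflow balF.
have flowG := is_flow_sub GF flowF.
pose x0 := tnth V1 ord0.
have [ends [P [endsV2 GP disjP]]] := balanced_decomposition x0 acG balG.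
have size_ends : size ends == q.+1 by rewrite (perm_size endsV2) size_tuple.
have ltV1 (i : 'I_q.+1) : i < size V1 by rewrite size_tuple.
exists (Tuple size_ends), (fun i => P i); split=> // [i|i j ij]; rewrite !(tnth_nth x0).
  by apply: is_path_sub (GP i (ltV1 i)) => a b /flowG /andP[].
have [[Gi _ _] [Gj _ _]] := (GP i (ltV1 i), GP j (ltV1 j)).
exact: walk_edges_disjoint flowG Gi Gj (disjP i j (ltV1 i) (ltV1 j) ij).
Qed.
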